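(* Let $F$ be an algebraically closed field with $\mathrm{char}\,F=2$. Then the maximal Mathieu subspaces of $M_2(F)$ are exactly the following: (i) the $2$-dimensional subspaces $V\subseteq I_2^\perp=\{b\in M_2(F):\mathrm{Tr}(b)=0\}$ with $I_2\notin V$; (ii) the subspaces $F(\lambda_1e_1+\lambda_2e_2)+e_1M_2(F)e_2$, where $e_1,e_2$ are nonzero idempotents with $e_1+e_2=I_2$ and $\lambda_1,\lambda_2\in F$ are distinct, nonzero, with $\lambda_1+\lambda_2\ne0$.
   Context: Let $\mathcal A$ be an associative algebra over a field $F$. An $F$-subspace $M\subseteq\mathcal A$ is a Mathieu subspace (MS) of $\mathcal A$ if for all $a,b,c\in\mathcal A$ such that $a^m\in M$ for all $m\ge 1$, there exists $N$ (depending on $a,b,c$) such that $ba^mc\in M$ for all $m\ge N$. A maximal MS of $\mathcal A$ is a proper MS of $\mathcal A$ that is not properly contained in any proper MS of $\mathcal A$. *)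

From HB Require Import structures.
From mathcomp Require Import all_boot all_order all_algebra all_field.
Set Implicit Arguments. Unset Strict Implicit. Unset Printing Implicit Defensive.
Import GRing.Theory.
Local Open Scope ring_scope.

Definition mathieu_subspace (F : fieldType) (A : falgType F) (M : {vspace A}) : Prop :=
  forall a b c : A,
    (forall m : nat, (1 <= m)%N -> a ^+ m \in M) ->
    exists N : nat, forall m : nat, (N <= m)%N -> b * a ^+ m * c \in M.

Definition maximal_mathieu_subspace (F : fieldType) (A : falgType F) (M : {vspace A}) : Prop :=
  [/\ mathieu_subspace M, M != fullv &
      forall W : {vspace A}, mathieu_subspace W -> W != fullv -> (M <= W)%VS -> W = M].

Definition corner_space (F : fieldType) (A : falgType F) (e1 e2 : A) : {vspace A} :=
  (linfun (fun x : A => e1 * x * e2) @: fullv)%VS.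

From HB Require Import structures.
From mathcomp Require Import all_boot all_order all_algebra all_field.
From mathcomp Require Import ring zify.
From Stdlib Require Import Classical.
Set Implicit Arguments. Unset Strict Implicit. Unset Printing Implicit Defensive.
Import GRing.Theory.
Local Open Scope ring_scope.

(* A proper subspace of M_2(F) is a Mathieu subspace iff it contains no nonzero idempotent: a
   nonzero idempotent e in a Mathieu subspace M puts every b e c, hence every matrix unit, in M;
   conversely if a and a^2 lie in an idempotent-free M, Cayley-Hamilton forces det a = tr a = 0,
   so a^2 = 0. Maximal Mathieu subspaces are thus the maximal idempotent-free subspaces.
   In an idempotent-free subspace det x = 0 forces tr x = 0. In characteristic 2 this bounds the
   dimension by 2 (a third dimension brings in E12, E21 and then the identity), and every smaller
   idempotent-free subspace extends to a plane. An idempotent-free plane V is either traceless,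
   or contains x with tr x, det x <> 0; then for the traceless y in V, det (x + t y) has no root
   t, so y^2 = 0 and tr (x y) = 0, which makes y off-diagonal with respect to the spectral
   idempotents of x and gives (ii). *)

Lemma mx_neq0P (V : nmodType) m n (a : 'M[V]_(m, n)) : reflect (exists i j, a i j != 0) (a != 0).
Proof.
apply: (iffP idP) => [a0|[i [j aij]]]; last first.
  by apply: contraNneq aij => ->; rewrite mxE.
case: (pickP [pred ij : 'I_m * 'I_n | a ij.1 ij.2 != 0]) => [[i j] aij|a_0].
  by exists i, j.
by case/eqP: a0; apply/matrixP => i j; rewrite mxE; apply/eqP/negbFE/(a_0 (i, j)).
Qed.

Lemma delta_mx_neq0 (R : nzRingType) m n (i : 'I_m) (j : 'I_n) :
  delta_mx i j != 0 :> 'M[R]_(m, n).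
Proof. by apply/mx_neq0P; exists i, j; rewrite mxE !eqxx oner_neq0. Qed.

Section MatrixUnits.
Variable R : comNzRingType.

Lemma delta_mulmx_entry m n p (a : 'M[R]_(m, n)) i (k l : 'I_p) j :
  (delta_mx k i *m a) l j = (l == k)%:R * a i j.
Proof.
rewrite mxE (bigD1 i) //= big1 => [|s /negbTE si]; last by rewrite mxE si andbF mul0r.
by rewrite mxE eqxx andbT addr0.
Qed.

Lemma mulmx_delta_entry m n p (a : 'M[R]_(m, n)) i j (k l : 'I_p) :
  (a *m delta_mx j k) i l = a i j * (l == k)%:R.
Proof.
rewrite mxE (bigD1 j) //= big1 => [|s /negbTE sj]; last by rewrite mxE sj mulr0.
by rewrite mxE eqxx addr0.
Qed.

Lemma delta_mul_delta_mx n (a : 'M[R]_n) i j k l :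
  delta_mx k i *m a *m delta_mx j l = a i j *: (delta_mx k l : 'M[R]_n).
Proof.
apply/matrixP => p q; rewrite mulmx_delta_entry delta_mulmx_entry !mxE.
by rewrite mulrAC -natrM mulnb mulrC.
Qed.

Lemma mulmx_delta_mul_entry n (a b : 'M[R]_n) i j k l :
  (a *m delta_mx j k *m b) i l = a i j * b k l.
Proof.
rewrite -mulmxA mxE (bigD1 j) //= big1 => [|s /negbTE sj].
  by rewrite delta_mulmx_entry eqxx mul1r addr0.
by rewrite delta_mulmx_entry sj mul0r mulr0.
Qed.

End MatrixUnits.

Section TwoByTwo.
Variable R : comNzRingType.
Implicit Types a b x y : 'M[R]_2.

Lemma ord2P (i : 'I_2) : i = 0 \/ i = 1.
Proof. by case: i => [[|[|n]] //= i_lt2]; [left | right]; apply: val_inj. Qed.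

Lemma mxtrace2 a : \tr a = a 0 0 + a 1 1.
Proof.
by rewrite /mxtrace !big_ord_recl big_ord0 addr0; congr (a _ _ + a _ _); apply: val_inj.
Qed.

Lemma det_mx2 a : \det a = a 0 0 * a 1 1 - a 0 1 * a 1 0.
Proof.
rewrite (expand_det_row _ 0) !big_ord_recl big_ord0 /cofactor !det_mx11 !mxE /=.
have l00 : lift 0 0 = 1 :> 'I_2 by apply: val_inj.
have l10 : lift ord0 0 = 1 :> 'I_2 by apply: val_inj.
have l11 : lift ord0 ord0 = 1 :> 'I_2 by apply: val_inj.
have l21 : lift 1 0 = 0 :> 'I_2 by apply: val_inj.
have o0 : ord0 = 0 :> 'I_2 by apply: val_inj.
by rewrite ?l00 ?l10 ?l11 ?o0 /= l21 expr0 expr1; ring.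
Qed.

Lemma mulmx2E a b i j : (a * b) i j = a i 0 * b 0 j + a i 1 * b 1 j.
Proof.
rewrite -mulmxE mxE !big_ord_recl big_ord0 addr0.
by congr (a _ _ * b _ _ + a _ _ * b _ _); apply: val_inj.
Qed.

Local Ltac mx2_ring := apply/matrixP => i j;
  have [->|->] := ord2P i; have [->|->] := ord2P j;
  rewrite ?det_mx2 ?mxtrace2 !(mulmx2E, mxE) /=; ring.

Lemma cayley_hamilton2 x : x * x = \tr x *: x - \det x *: 1.
Proof. mx2_ring. Qed.

Lemma det0_mul_sandwich e x : \det e = 0 -> e * x * e = \tr (e * x) *: e.
Proof.
move=> de; have -> : e * x * e = \tr (e * x) *: e - \det e *: (\tr x *: 1 - x) by mx2_ring.
by rewrite de scale0r subr0.
Qed.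

Lemma det_addZ2 x y (t : R) :
  \det (x + t *: y) = \det x + t * (\tr x * \tr y - \tr (x * y)) + t ^+ 2 * \det y.
Proof. by rewrite !det_mx2 !mxtrace2 !(mulmx2E, mxE); ring. Qed.

Lemma char_poly2_factor x (t : R) :
  (x - t *: 1) * (x - (\tr x - t) *: 1) = (t * (\tr x - t) - \det x) *: 1.
Proof. mx2_ring. Qed.

End TwoByTwo.

Definition idempotent_free (F : fieldType) (A : falgType F) (M : {vspace A}) :=
  forall e, e \in M -> e * e = e -> e = 0.

Section IdempotentFree.
Variables (F : fieldType) (A : falgType F).
Implicit Types (M : {vspace A}) (e : A).

Lemma idempotent_free_1 M : idempotent_free M -> 1 \notin M.
Proof. by move=> idfM; apply/negP => /idfM /(_ (mulr1 _)) /eqP; rewrite oner_eq0. Qed.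

Lemma idempotent_free_proper M : idempotent_free M -> M != fullv.
Proof. by move=> /idempotent_free_1; apply: contraNneq => ->; apply: memvf. Qed.

Lemma mathieu_idempotent_sandwich M e b c :
  mathieu_subspace M -> e \in M -> e * e = e -> b * e * c \in M.
Proof.
move=> msM eM ee; have eX m : (0 < m)%N -> e ^+ m = e.
  by elim: m => [|[|m] IHm] // _; rewrite exprS IHm.
have eXM m : (1 <= m)%N -> e ^+ m \in M by move=> /eX ->.
by have [N /(_ N.+1 (leqnSn N))] := msM e b c eXM; rewrite eX.
Qed.

End IdempotentFree.

Lemma mathieu_idempotent_free (F : fieldType) n (M : {vspace 'M[F]_n.+1}) :
  mathieu_subspace M -> M != fullv -> idempotent_free M.
Proof.
move=> msM + e eM ee; apply: contraNeq => /mx_neq0P [i [j eij]].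
rewrite eqEsubv subvf /=; apply/subvP => a _.
rewrite (matrix_sum_delta a); apply: memv_suml => k _; apply: memv_suml => l _.
have -> : delta_mx k l = (e i j)^-1 *: (delta_mx k i * e * delta_mx j l).
  by rewrite -!mulmxE delta_mul_delta_mx scalerA mulVf ?scale1r.
by rewrite !memvZ // mathieu_idempotent_sandwich.
Qed.

Section IdempotentFreeMx2.
Variable F : fieldType.
Implicit Types (M : {vspace 'M[F]_2}) (x : 'M[F]_2).

Lemma idempotent_free_det0 M x :
  idempotent_free M -> x \in M -> \det x = 0 -> \tr x = 0.
Proof.
move=> idfM xM dx; apply: contra_eq (idempotent_free_1 idfM) => tx; apply/negPn.
have xx : x * x = \tr x *: x by rewrite cayley_hamilton2 dx scale0r subr0.
have ee : ((\tr x)^-1 *: x) * ((\tr x)^-1 *: x) = (\tr x)^-1 *: x.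
  by rewrite -scalerAl -scalerAr xx !scalerA -mulrA mulVf ?mulr1.
have /eqP := idfM _ (memvZ _ xM) ee.
by rewrite scaler_eq0 invr_eq0 (negPf tx) => /eqP x0; rewrite x0 linear0 eqxx in tx.
Qed.

Lemma mathieu_of_idempotent_free M : idempotent_free M -> mathieu_subspace M.
Proof.
move=> idfM a b c aX; have aM := aX 1%N isT; have a2M := aX 2%N isT.
rewrite expr1 in aM; rewrite expr2 in a2M.
have [da|da] := eqVneq (\det a) 0.
  have aa : a * a = 0.
    by rewrite cayley_hamilton2 da (idempotent_free_det0 idfM aM da) !scale0r subr0.
  by exists 2%N => m m_ge2; rewrite -(subnK m_ge2) exprD expr2 aa !mulr0 mul0r mem0v.
have : 1 \in M.
  have -> : 1 = (\det a)^-1 *: (\tr a *: a - a * a) :> 'M[F]_2.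
    by rewrite cayley_hamilton2 opprB addrC subrK scalerA mulVf ?scale1r.
  by rewrite memvZ // memvB // memvZ.
by rewrite (negPf (idempotent_free_1 idfM)).
Qed.

Lemma idempotent_free_traceless M :
  (forall b, b \in M -> \tr b = 0) -> 1 \notin M -> idempotent_free M.
Proof.
move=> trM M1 e eM ee; have := cayley_hamilton2 e; rewrite ee trM // scale0r sub0r.
have [-> e_scalar|de e_scalar] := eqVneq (\det e) 0; first by rewrite e_scalar scale0r oppr0.
have : 1 \in M.
  have -> : 1 = (- \det e)^-1 *: e by rewrite {2}e_scalar -scaleNr scalerA mulVf ?scale1r ?oppr_eq0.
  exact: memvZ.
by rewrite (negPf M1).
Qed.

End IdempotentFreeMx2.

Section Planes.
Variables (K : fieldType) (vT : vectType K).
Implicit Types (U W : {vspace vT}) (u v : vT).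

Lemma dim_add_lines u v : u != 0 -> v \notin <[u]>%VS -> \dim (<[u]> + <[v]>) = 2%N.
Proof.
move=> u0 vu; apply/eqP; rewrite addvC -[<[u]>%VS]span_seq1 -span_cons.
by rewrite [_ == _](_ : free _) // free_cons span_seq1 vu seq1_free.
Qed.

Lemma meet_neq0 U W :
  (\dim {:vT} < \dim U + \dim W)%N -> exists2 z, z \in (U :&: W)%VS & z != 0.
Proof.
move=> dimUW; exists (vpick (U :&: W)%VS); first exact: memv_pick.
rewrite vpick0 -dimv_eq0 -lt0n.
by have := dimv_sum_cap U W; have := dimvS (subvf (U + W)%VS); lia.
Qed.

Lemma plane_eq U W x y :
  \dim U = 2%N -> \dim W = 2%N -> x \in U -> y \in U -> x \in W -> y \in W ->
  x != 0 -> y \notin <[x]>%VS -> U = W.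
Proof.
move=> dU dW xU yU xW yW x0 yx; have dxy := dim_add_lines x0 yx.
have xyS (Z : {vspace vT}) : \dim Z = 2%N -> x \in Z -> y \in Z -> (<[x]> + <[y]>)%VS = Z.
  by move=> dZ xZ yZ; apply/eqP; rewrite eqEdim subv_add -!memvE xZ yZ dZ dxy.
by rewrite -(xyS U) // -(xyS W).
Qed.

End Planes.

Lemma delta_notin_line (F : fieldType) (i j k l : 'I_2) :
  (i, j) != (k, l) -> delta_mx i j \notin <[delta_mx k l : 'M[F]_2]>%VS.
Proof.
move=> ne; apply/vlineP => [[c /matrixP/(_ i j)]].
by rewrite !mxE !eqxx -xpair_eqE (negPf ne) mulr0 => /eqP; rewrite oner_eq0.
Qed.

Lemma delta_mem_idempotent_free (F : fieldType) (W : {vspace 'M[F]_2}) i j :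
  idempotent_free W -> (2 < \dim W)%N -> i != j -> delta_mx i j \in W.
Proof.
move=> idfW dimW ij.
have [|z /memv_capP [zW /memv_addP [_ /vlineP [a ->] [_ /vlineP [b ->] zE]]] z0] :=
  @meet_neq0 _ _ W (<[delta_mx i i]> + <[delta_mx i j]>)%VS.
  rewrite dim_add_lines ?delta_mx_neq0 ?delta_notin_line ?xpair_eqE ?eqxx 1?eq_sym //.
  by rewrite dimvf dim_matrix; lia.
have [dz tz] : \det z = 0 /\ \tr z = a.
  rewrite zE det_mx2 mxtrace2 !mxE.
  by case: (ord2P i) (ord2P j) ij => -> [] -> //= _; split; ring.
rewrite -tz (idempotent_free_det0 idfW zW dz) scale0r add0r in zE.
have b0 : b != 0 by apply: contraNneq z0 => b0; rewrite zE b0 scale0r.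
have -> : delta_mx i j = b^-1 *: z by rewrite zE scalerA mulVf ?scale1r.
exact: memvZ.
Qed.

Lemma idempotent_free_dim_le2 (F : fieldType) (charF2 : 2%N \in [pchar F])
    (W : {vspace 'M[F]_2}) :
  idempotent_free W -> (\dim W <= 2)%N.
Proof.
move=> idfW; rewrite leqNgt; apply/negP => dimW.
have E01 := delta_mem_idempotent_free (i := 0%R) (j := 1%R) idfW dimW isT.
have E10 := delta_mem_idempotent_free (i := 1%R) (j := 0%R) idfW dimW isT.
have [|z /memv_capP [zW /memv_addP [_ /vlineP [p ->] [_ /vlineP [q ->] zE]]] z0] :=
  @meet_neq0 _ _ W (<[(delta_mx 0 0)%R]> + <[(delta_mx 1 1)%R]>)%VS.
  rewrite dim_add_lines ?delta_mx_neq0 ?delta_notin_line //.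
  by rewrite dimvf dim_matrix; lia.
(* w has determinant p q - p q = 0, so its trace p + q must vanish *)
have wW : z + (p * q) *: delta_mx 0 1 + delta_mx 1 0 \in W by rewrite !memvD // memvZ.
have tw : \tr (z + (p * q) *: delta_mx 0 1 + delta_mx 1 0) = 0.
  by apply: (idempotent_free_det0 idfW wW); rewrite zE det_mx2 !mxE /=; ring.
have qp : q = p.
  have /eqP : p + q = 0 by rewrite -tw zE mxtrace2 !mxE /=; ring.
  by rewrite addr_eq0 oppr_pchar2 // => /eqP.
have z1 : z = p *: 1.
  by apply/matrixP => i k; rewrite zE qp !mxE; case: (ord2P i) (ord2P k) => -> [] -> /=; ring.
have p0 : p != 0 by apply: contraNneq z0 => p0; rewrite z1 p0 scale0r.
have := idempotent_free_1 idfW; rewrite (_ : 1 = p^-1 *: z) ?memvZ //.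
by rewrite z1 scalerA mulVf ?scale1r.
Qed.

Lemma scalerIl (K : fieldType) (V : lmodType K) (v : V) :
  v != 0 -> injective (fun k : K => k *: v).
Proof.
move=> v0 k m /eqP; rewrite -subr_eq0 -scalerBl scaler_eq0 (negPf v0) orbF subr_eq0.
by move/eqP.
Qed.

Definition complementary_idempotents (F : fieldType) (A : falgType F) (e1 e2 : A) :=
  [/\ e1 != 0, e2 != 0, e1 * e1 = e1, e2 * e2 = e2 & e1 + e2 = 1].

Section Corner.
Variables (F : fieldType) (A : falgType F).

Lemma cornerP (e1 e2 x : A) : reflect (exists u, x = e1 * u * e2) (x \in corner_space e1 e2).
Proof.
pose f x := e1 * x * e2.
have f_lin : linear f by move=> k u w; rewrite /f mulrDr mulrDl -scalerAr -scalerAl.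
pose fL : {linear A -> A} := HB.pack f (GRing.isLinear.Build _ _ _ _ f f_lin).
have fE u : linfun (fun x => e1 * x * e2) u = e1 * u * e2 := lfunE fL u.
apply: (iffP memv_imgP) => [[u _ ->]|[u ->]]; first by exists u; rewrite fE.
by exists u; rewrite ?memvf ?fE.
Qed.

Lemma complementary_idempotents_mul0 (e1 e2 : A) :
  complementary_idempotents e1 e2 -> e1 * e2 = 0 /\ e2 * e1 = 0.
Proof.
case=> _ _ e1e1 _ e12; have -> : e2 = 1 - e1 by rewrite -e12 addrC addKr.
by rewrite mulrBr mulrBl mulr1 mul1r e1e1 subrr.
Qed.

Lemma complementary_idempotentsC (e1 e2 : A) :
  complementary_idempotents e1 e2 -> complementary_idempotents e2 e1.
Proof. by case=> *; split; rewrite // addrC. Qed.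

Lemma corner_idempotent_free (e1 e2 : A) (l1 l2 : F) :
  complementary_idempotents e1 e2 -> l1 != l2 -> l1 != 0 -> l2 != 0 ->
  idempotent_free (<[l1 *: e1 + l2 *: e2]> + corner_space e1 e2)%VS.
Proof.
move=> e12 l12 l1_0 l2_0; have [e1_0 e2_0 e1e1 e2e2 _] := e12.
have [e1e2 e2e1] := complementary_idempotents_mul0 e12.
move=> _ /memv_addP [_ /vlineP [a ->] [_ /cornerP [u ->] ->]].
set n := e1 * u * e2; set y := _ + n => yy.
have ne1 : n * e1 = 0 by rewrite /n -mulrA e2e1 mulr0.
have e2n : e2 * n = 0 by rewrite /n !mulrA e2e1 !mul0r.
have e1y : e1 * y = (a * l1) *: e1 + n.
  by rewrite mulrDr /n !mulrA e1e1 -scalerAr mulrDr -!scalerAr e1e1 e1e2 scaler0 addr0 scalerA.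
have ye1 : y * e1 = (a * l1) *: e1.
  by rewrite mulrDl ne1 addr0 -scalerAl mulrDl -!scalerAl e1e1 e2e1 scaler0 addr0 scalerA.
have e2y : e2 * y = (a * l2) *: e2.
  by rewrite mulrDr e2n addr0 -scalerAr mulrDr -!scalerAr e2e2 e2e1 scaler0 add0r scalerA.
have ye2 : y * e2 = (a * l2) *: e2 + n.
  by rewrite mulrDl /n -!mulrA e2e2 -scalerAl mulrDl -!scalerAl e2e2 e1e2 scaler0 add0r scalerA.
(* compressing y = y * y by e1 and by e2 shows that a l1 and a l2 are idempotent scalars *)
have al1 : (a * l1) * (a * l1) = a * l1.
  apply: (scalerIl e1_0); transitivity (e1 * y * e1).
    rewrite -{1}yy !mulrA -(mulrA (e1 * y)) e1y ye1 mulrDl -!scalerAr -!scalerAl e1e1 ne1.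
    by rewrite scaler0 addr0 scalerA !mulrA.
  by rewrite -mulrA ye1 -scalerAr e1e1.
have al2 : (a * l2) * (a * l2) = a * l2.
  apply: (scalerIl e2_0); transitivity (e2 * y * e2).
    rewrite -{1}yy !mulrA -(mulrA (e2 * y)) e2y ye2 mulrDr -!scalerAr -!scalerAl e2e2 e2n.
    by rewrite scaler0 addr0 scalerA !mulrA.
  by rewrite e2y -scalerAl e2e2.
have [a0|a0] := eqVneq a 0.
  by rewrite -yy /y a0 scale0r add0r {1}/n -!mulrA e2n !mulr0.
have idem1 (k : F) : k != 0 -> k * k = k -> k = 1.
  by move=> k0 kk; apply: (mulfI k0); rewrite kk mulr1.
have := idem1 _ (mulf_neq0 a0 l1_0) al1; rewrite -(idem1 _ (mulf_neq0 a0 l2_0) al2).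
by move/(mulfI a0)/eqP; rewrite (negPf l12).
Qed.

End Corner.

Lemma matrix_ring_prime (R : idomainType) n (a b : 'M[R]_n.+1) :
  a != 0 -> b != 0 -> exists x, a * x * b != 0.
Proof.
move=> /mx_neq0P [i [j aij]] /mx_neq0P [k [l bkl]]; exists (delta_mx j k).
by apply/mx_neq0P; exists i, l; rewrite -!mulmxE mulmx_delta_mul_entry mulf_neq0.
Qed.

Lemma idempotent_det0 (R : idomainType) n (e : 'M[R]_n.+1) :
  e * e = e -> e != 1 -> \det e = 0.
Proof.
move=> ee e1; apply/eqP; apply: contraNT e1 => de; have dede : \det e * \det e = \det e.
  by rewrite -det_mulmx mulmxE ee.
have {de} de1 : \det e = 1 by apply: (mulfI de); rewrite dede mulr1.
have eU : e \is a GRing.unit by rewrite unitmxE de1 unitr1.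
by rewrite -[e]mul1r -(mulVr eU) -mulrA ee.
Qed.

Lemma corner_plane_dim (F : fieldType) (charF2 : 2%N \in [pchar F]) (e1 e2 : 'M[F]_2) l1 l2 :
  complementary_idempotents e1 e2 -> l1 != l2 -> l1 != 0 -> l2 != 0 ->
  \dim (<[l1 *: e1 + l2 *: e2]> + corner_space e1 e2) = 2%N.
Proof.
move=> e12 l12 l1_0 l2_0; have [e1_0 e2_0 e1e1 _ _] := e12.
have [e1e2 e2e1] := complementary_idempotents_mul0 e12.
apply/eqP; rewrite eqn_leq (idempotent_free_dim_le2 charF2) /=; last exact: corner_idempotent_free.
have [u n0] := matrix_ring_prime e1_0 e2_0; set s := _ + _.
have e1s : e1 * s * e1 = l1 *: e1.
  by rewrite mulrDr mulrDl -!scalerAr -!scalerAl e1e1 e1e2 e1e1 mul0r scaler0 addr0.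
have ns : e1 * u * e2 \notin <[s]>%VS.
  apply: contra n0 => /vlineP [k nk]; have /eqP : (k * l1) *: e1 = 0.
    by rewrite -scalerA -e1s scalerAl scalerAr -nk -!mulrA e2e1 !mulr0.
  by rewrite scaler_eq0 (negPf e1_0) orbF mulf_eq0 (negPf l1_0) orbF nk => /eqP ->; rewrite scale0r.
have s0 : s != 0.
  apply: contraNneq e1_0 => s0; move: e1s; rewrite s0 mulr0 mul0r => /esym/eqP.
  by rewrite scaler_eq0 (negPf l1_0) orFb.
rewrite -[X in (X <= _)%N](dim_add_lines s0 ns) dimvS // addvS //.
by rewrite -memvE; apply/cornerP; exists u.
Qed.

Lemma traceless_det0_corner (F : fieldType) (e1 e2 y : 'M[F]_2) :
  complementary_idempotents e1 e2 -> \tr y = 0 -> \det y = 0 -> \tr (e1 * y) = 0 ->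
  y \in corner_space e1 e2 \/ y \in corner_space e2 e1.
Proof.
move=> e12 ty dy te1y; have [e1_0 e2_0 e1e1 e2e2 e1De2] := e12.
have e2E : e2 = 1 - e1 by rewrite -e1De2 addrC addKr.
have de1 : \det e1 = 0.
  by apply: idempotent_det0 e1e1 _; apply: contraNneq e2_0 => e1_1; rewrite e2E e1_1 subrr.
have de2 : \det e2 = 0.
  apply: idempotent_det0 e2e2 _; apply: contraNneq e1_0 => e2_1.
  by rewrite -(addrK e2 e1) e1De2 e2_1 subrr.
have te2y : \tr (e2 * y) = 0 by rewrite e2E mulrBl mul1r raddfB /= ty te1y subrr.
have y11 : e1 * y * e1 = 0 by rewrite det0_mul_sandwich // te1y scale0r.
have y22 : e2 * y * e2 = 0 by rewrite det0_mul_sandwich // te2y scale0r.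
have yy : y * y = 0 by rewrite cayley_hamilton2 ty dy !scale0r subrr.
have yE : y = e1 * y * e2 + e2 * y * e1.
  by rewrite -[LHS]mul1r -[LHS]mulr1 -e1De2 !mulrDr !mulrDl y11 y22 add0r addr0 addrC.
have y1212 : e1 * y * e2 * y * e1 = 0.
  by rewrite e2E mulrBr mulr1 !mulrBl y11 !mul0r subr0 -(mulrA e1 y y) yy mulr0 mul0r.
have y12_y21 w : (e1 * y * e2) * w * (e2 * y * e1) = 0.
  have -> : e1 * y * e2 * w * (e2 * y * e1) = e1 * y * (e2 * w * e2) * y * e1.
    by rewrite !mulrA.
  by rewrite det0_mul_sandwich // -scalerAr -!scalerAl y1212 scaler0.
have [y12|y12] := eqVneq (e1 * y * e2) 0.
  by right; apply/cornerP; exists y; rewrite {1}yE y12 add0r.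
have [y21|y21] := eqVneq (e2 * y * e1) 0.
  by left; apply/cornerP; exists y; rewrite {1}yE y21 addr0.
by have [w] := matrix_ring_prime y12 y21; rewrite y12_y21 eqxx.
Qed.

Lemma closed_quadratic_root (F : closedFieldType) (b c : F) : exists t, t ^+ 2 = b * t + c.
Proof.
have [t ht] := @solve_monicpoly F 2 (nth 0 [:: c; b]) isT.
by exists t; rewrite ht !big_ord_recl big_ord0 /= expr0 expr1 mulr1 addr0 addrC.
Qed.

Lemma closed_quadratic_nonvanishing (F : closedFieldType) (a b c : F) :
  (forall t, a + t * b + t ^+ 2 * c != 0) -> b = 0 /\ c = 0.
Proof.
move=> nz; have [c0|c0] := eqVneq c 0.
  split=> //; apply/eqP; apply: contraNT (nz (- a / b)) => b0.
  by rewrite c0 mulr0 addr0 divfK // subrr.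
have [t ht] := closed_quadratic_root (- (b / c)) (- (a / c)).
by exfalso; move/negP: (nz t); apply; apply/eqP; rewrite ht; field.
Qed.

Lemma exists_traceless_outside (F : fieldType) (x : 'M[F]_2) :
  exists2 y, \tr y = 0 & y \notin (<[x]> + <[1]>)%VS.
Proof.
have [x10|x10] := eqVneq (x 1 0) 0.
  exists (delta_mx 1 0); first by rewrite mxtrace2 !mxE /= addr0.
  apply/memv_addP => [[_ /vlineP [k ->] [_ /vlineP [m ->] /matrixP/(_ 1 0)]]].
  by rewrite !mxE x10 /= mulr0 add0r mulr0 => /eqP; rewrite oner_eq0.
exists (delta_mx 0 1); first by rewrite mxtrace2 !mxE /= addr0.
apply/memv_addP => [[_ /vlineP [k ->] [_ /vlineP [m ->] E]]].
have /matrixP/(_ 1 0) := E; rewrite !mxE /= mulr0 addr0 => /esym/eqP.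
rewrite mulf_eq0 (negPf x10) orbF => /eqP k0.
by have /matrixP/(_ 0 1) := E; rewrite !mxE k0 /= mul0r mulr0 add0r => /eqP; rewrite oner_eq0.
Qed.

Section ClosedChar2.
Variables (F : closedFieldType) (charF2 : 2%N \in [pchar F]).
Implicit Types (V : {vspace 'M[F]_2}) (x y : 'M[F]_2).

Lemma mxtrace_scalar2 (k : F) : \tr (k *: 1 : 'M[F]_2) = 0.
Proof. by rewrite mxtraceZ mxtrace1 (pcharf0 charF2) mulr0. Qed.

Lemma spectral_idempotents x : \tr x != 0 -> \det x != 0 ->
  exists e1 e2 l1 l2, complementary_idempotents e1 e2 /\
    [/\ l1 != l2, l1 != 0, l2 != 0, l1 + l2 != 0 & x = l1 *: e1 + l2 *: e2].
Proof.
move=> tx dx; have [l1 hl1] := closed_quadratic_root (\tr x) (- \det x).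
set l2 := \tr x - l1.
have l12_sum : l1 + l2 = \tr x by rewrite /l2 addrC subrK.
have l12_prod : l1 * l2 = \det x by rewrite /l2 mulrBr -expr2 hl1 mulrC; ring.
have l1_0 : l1 != 0 by apply: contraNneq dx => l1_0; rewrite -l12_prod l1_0 mul0r.
have l2_0 : l2 != 0 by apply: contraNneq dx => l2_0; rewrite -l12_prod l2_0 mulr0.
have l12 : l1 - l2 != 0 by rewrite oppr_pchar2 // l12_sum.
set p := x - l2 *: 1.
have p0 : p * (x - l1 *: 1) = 0.
  have := char_poly2_factor x l2; rewrite -/p (_ : \tr x - l2 = l1); last by rewrite -l12_sum addrK.
  by rewrite mulrC l12_prod subrr scale0r.
have pp : p * p = (l1 - l2) *: p.
  have pE : p = x - l1 *: 1 + (l1 - l2) *: 1 by rewrite scalerBl addrA subrK.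
  by rewrite {2}pE mulrDr p0 add0r -scalerAr mulr1.
set e1 := (l1 - l2)^-1 *: p.
have e1e1 : e1 * e1 = e1.
  by rewrite -scalerAl -scalerAr pp !scalerA divfK.
have xE : x = l1 *: e1 + l2 *: (1 - e1).
  by rewrite scalerBr addrCA -scalerBl scalerA mulfV // scale1r /p addrC subrK.
exists e1, (1 - e1), l1, l2; split; [split | split] => //.
- by apply: contraNneq tx => e1_0; rewrite xE e1_0 scaler0 add0r subr0 mxtrace_scalar2.
- apply: contraNneq tx => /eqP; rewrite subr_eq0 => /eqP e1_1.
  by rewrite xE -e1_1 subrr scaler0 addr0 mxtrace_scalar2.
- by rewrite mulrBr mulr1 mulrBl mul1r e1e1 subrr subr0.
- by rewrite addrC subrK.
- by rewrite -subr_eq0.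
- by rewrite l12_sum.
Qed.

Lemma idempotent_free_pencil V x y :
  idempotent_free V -> x \in V -> y \in V -> \tr x != 0 -> \tr y = 0 ->
  [/\ \det x != 0, \det y = 0 & \tr (x * y) = 0].
Proof.
move=> idfV xV yV tx ty.
have det_neq0 t : \det (x + t *: y) != 0.
  apply: contra tx => /eqP d0; apply/eqP.
  have := idempotent_free_det0 idfV (memvD xV (memvZ t yV)) d0.
  by rewrite mxtraceD mxtraceZ ty mulr0 addr0.
have [txy dy] : - \tr (x * y) = 0 /\ \det y = 0.
  apply: (closed_quadratic_nonvanishing (a := \det x)) => t.
  by have := det_neq0 t; rewrite det_addZ2 ty mulr0 sub0r.
split=> //; last by apply/eqP; rewrite -oppr_eq0 txy.
by have := det_neq0 0; rewrite scale0r addr0.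
Qed.

Lemma idempotent_free_plane_spectral V x :
  idempotent_free V -> \dim V = 2%N -> x \in V -> \tr x != 0 ->
  exists e1 e2 l1 l2, complementary_idempotents e1 e2 /\
    [/\ l1 != l2, l1 != 0, l2 != 0, l1 + l2 != 0 &
         V = (<[l1 *: e1 + l2 *: e2]> + corner_space e1 e2)%VS].
Proof.
move=> idfV dV xV tx; have x0 : x != 0 by apply: contraNneq tx => ->; rewrite linear0.
have [z zV zx] : exists2 z, z \in V & z \notin <[x]>%VS.
  by apply/subvPn/negP => /dimvS; rewrite dV dim_vline x0.
set y := z - (\tr z / \tr x) *: x.
have yV : y \in V by rewrite memvB // memvZ.
have ty : \tr y = 0 by rewrite raddfB /= mxtraceZ divfK // subrr.
have yx : y \notin <[x]>%VS.
  by apply: contra zx => yx; rewrite -(subrK ((\tr z / \tr x) *: x) z) memvD // memvZ // memv_line.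
have [dx dy txy] := idempotent_free_pencil idfV xV yV tx ty.
have [e1 [e2 [l1 [l2 [e12 [l12 l1_0 l2_0 l12s xE]]]]]] := spectral_idempotents tx dx.
have te1y : \tr (e1 * y) = 0.
  have [_ _ _ _ e1De2] := e12; have e2E : e2 = 1 - e1 by rewrite -e1De2 addrC addKr.
  have /eqP : (l1 - l2) * \tr (e1 * y) = 0.
    rewrite -txy xE e2E [in RHS]mulrDl -!scalerAl [in RHS]mulrBl mul1r.
    by rewrite mxtraceD !mxtraceZ raddfB /= ty; ring.
  by rewrite mulf_eq0 subr_eq0 (negPf l12) => /eqP.
have plane f1 f2 m1 m2 : complementary_idempotents f1 f2 -> m1 != m2 -> m1 != 0 -> m2 != 0 ->
    x = m1 *: f1 + m2 *: f2 -> y \in corner_space f1 f2 ->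
    V = (<[m1 *: f1 + m2 *: f2]> + corner_space f1 f2)%VS.
  move=> f12 m12 m1_0 m2_0 xE' yC; rewrite -xE'.
  apply: (plane_eq dV _ xV yV _ _ x0 yx).
  - by rewrite xE'; apply: corner_plane_dim.
  - by rewrite memvE addvSl.
  - exact: subvP (addvSr _ _) _ yC.
have [yC|yC] := traceless_det0_corner e12 ty dy te1y.
  by exists e1, e2, l1, l2; split; [|split; rewrite // (plane e1 e2 l1 l2)].
have e21 := complementary_idempotentsC e12.
exists e2, e1, l2, l1; split=> //.
split=> //; [by rewrite eq_sym | by rewrite addrC |].
by apply: plane; rewrite // 1?eq_sym // addrC.
Qed.

Lemma idempotent_free_line_extend x : x != 0 -> idempotent_free <[x]> ->
  exists W, [/\ idempotent_free W, \dim W = 2%N & x \in W].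
Proof.
move=> x0 idfx; have [tx|tx] := eqVneq (\tr x) 0; last first.
  have dx : \det x != 0.
    by apply: contra tx => /eqP dx; rewrite (idempotent_free_det0 idfx (memv_line x)).
  have [e1 [e2 [l1 [l2 [e12 [l12 l1_0 l2_0 _ xE]]]]]] := spectral_idempotents tx dx.
  exists (<[x]> + corner_space e1 e2)%VS; rewrite memvE addvSl xE.
  by split; [apply: corner_idempotent_free | apply: corner_plane_dim |].
have [y ty yx1] := exists_traceless_outside x.
have yx : y \notin <[x]>%VS by apply: contra yx1; apply: subvP (addvSl _ _) _.
exists (<[x]> + <[y]>)%VS; split; [|exact: dim_add_lines|by rewrite memvE addvSl].
apply: idempotent_free_traceless.
  move=> _ /memv_addP [_ /vlineP [k ->] [_ /vlineP [m ->] ->]].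
  by rewrite mxtraceD !mxtraceZ tx ty !mulr0 addr0.
apply/memv_addP => [[_ /vlineP [k ->] [_ /vlineP [m ->] E]]].
have [m0|m0] := eqVneq m 0.
  move: (idempotent_free_1 idfx); rewrite E m0 scale0r addr0 memvZ ?memv_line //.
apply: (negP yx1); rewrite (_ : y = m^-1 *: 1 - (m^-1 * k) *: x).
  by rewrite addrC memv_add ?memvN ?memvZ ?memv_line.
by rewrite E scalerDr !scalerA mulVf // scale1r addrC addKr.
Qed.

Lemma idempotent_free_extend V : idempotent_free V -> (\dim V < 2)%N ->
  exists W, [/\ idempotent_free W, \dim W = 2%N & (V <= W)%VS].
Proof.
move=> idfV dV.
have [x [x0 idfx Vx]] : exists x, [/\ x != 0, idempotent_free <[x]> & (V <= <[x]>)%VS].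
  have [->|V0] := eqVneq V 0%VS.
    exists (delta_mx 0 1); split; rewrite ?delta_mx_neq0 ?sub0v //.
    apply: idempotent_free_traceless.
      by move=> _ /vlineP [k ->]; rewrite mxtraceZ mxtrace2 !mxE /= addr0 mulr0.
    by apply/vlineP => [[k /matrixP/(_ 0 0)]]; rewrite !mxE /= mulr0 => /eqP; rewrite oner_eq0.
  have x0 : vpick V != 0 by rewrite vpick0.
  have xV : (<[vpick V]> <= V)%VS by rewrite -memvE memv_pick.
  have Vx : V = <[vpick V]>%VS.
    apply/esym/eqP; rewrite eqEdim xV dim_vline x0.
    by move: dV (V0); rewrite -dimv_eq0; case: (\dim V) => [|[]].
  by exists (vpick V); rewrite -Vx.
have [W [idfW dW xW]] := idempotent_free_line_extend x0 idfx.
by exists W; split; rewrite // (subv_trans Vx) // -memvE.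
Qed.

Lemma maximal_mathieu_idempotent_free_plane V :
  maximal_mathieu_subspace V <-> idempotent_free V /\ \dim V = 2%N.
Proof.
split=> [[msV VT maxV]|[idfV dV]].
  have idfV := mathieu_idempotent_free msV VT; split=> //.
  apply/eqP; rewrite eqn_leq (idempotent_free_dim_le2 charF2 idfV) leqNgt.
  apply/negP => /[dup] dV /(idempotent_free_extend idfV) [W [idfW dW VW]].
  have WV := maxV W (mathieu_of_idempotent_free idfW) (idempotent_free_proper idfW) VW.
  by move: dV; rewrite -WV dW.
split; [exact: mathieu_of_idempotent_free | exact: idempotent_free_proper |].
move=> W msW WT VW; have idfW := mathieu_idempotent_free msW WT.
by apply/esym/eqP; rewrite eqEdim VW dV (idempotent_free_dim_le2 charF2 idfW).
Qed.

Lemma idempotent_free_plane_classification V :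
  idempotent_free V /\ \dim V = 2%N <->
  [/\ \dim V = 2%N, (forall b, b \in V -> \tr b = 0) & 1 \notin V]
  \/ exists e1 e2 l1 l2, complementary_idempotents e1 e2 /\
      [/\ l1 != l2, l1 != 0, l2 != 0, l1 + l2 != 0 &
           V = (<[l1 *: e1 + l2 *: e2]> + corner_space e1 e2)%VS].
Proof.
split=> [[idfV dV]|[[dV trV V1]|[e1 [e2 [l1 [l2 [e12 [l12 l1_0 l2_0 _ ->]]]]]]]].
- case: (classic (exists2 x, x \in V & \tr x != 0)) => [[x xV tx]|notr].
    by right; exact: (idempotent_free_plane_spectral idfV dV xV tx).
  left; split; [done | | exact: idempotent_free_1].
  by move=> b bV; apply: NNPP => tb; apply: notr; exists b => //; apply/eqP.
- by split=> //; apply: idempotent_free_traceless.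
- by split; [apply: corner_idempotent_free | apply: corner_plane_dim].
Qed.

End ClosedChar2.

Theorem theorem3p6 (F : closedFieldType) (charF2 : 2%N \in [pchar F])
    (V : {vspace 'M[F]_2}) :
  maximal_mathieu_subspace V <->
  ( [/\ \dim V = 2%N, (forall b, b \in V -> \tr b = 0) & (1%:M : 'M[F]_2) \notin V ]
  \/
    exists (e1 e2 : 'M[F]_2) (l1 l2 : F),
      [/\ e1 != 0, e2 != 0, e1 * e1 = e1, e2 * e2 = e2 & e1 + e2 = 1] /\
      [/\ l1 != l2, l1 != 0, l2 != 0, l1 + l2 != 0 &
          V = (<[l1 *: e1 + l2 *: e2]> + corner_space e1 e2)%VS] ).
Proof.
exact: iff_trans (maximal_mathieu_idempotent_free_plane charF2 V)
                 (idempotent_free_plane_classification charF2 V).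
Qed.
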